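(* Let $V$ be an upper probability on $(\Omega,\mathcal{F})$ and $\theta:\Omega\to\Omega$ a measurable map preserving $V$. Consider the statements: (i) $\theta$ is ergodic with respect to $V$; (ii) every bounded measurable $\xi:\Omega\to\mathbb{R}$ with $\xi(\theta\omega)=\xi(\omega)$ for all $\omega$ is constant quasi-surely; (iii) every measurable $\xi:\Omega\to\mathbb{R}$ with $\xi\circ\theta=\xi$ quasi-surely is constant quasi-surely. Then (iii) implies (ii) and (ii) implies (i). Moreover, if $V$ is continuous from below, then (ii) and (i) are equivalent; if $V$ is continuous, all three statements are equivalent.
   Context: An upper probability is $V(A)=\sup_{P\in\mathcal{P}}P(A)$ for a nonempty set $\mathcal{P}$ of finitely additive probabilities on $\mathcal{F}$. $\theta$ preserves $V$ if $V(\theta^{-1}A)=V(A)$ for all $A\in\mathcal{F}$. $V$ is continuous from below if $V(A_n)\to V(A)$ for $A_n\uparrow A$, and continuous if also $V(A_n)\to V(A)$ for $A_n\downarrow A$. A statement holds quasi-surely if it holds outside a set $A$ with $V(A)=0$; ''$\xi$ is constant quasi-surely'' means there is $c\in\mathbb{R}$ with $V(\{\xi\ne c\})=0$. $\theta$ is ergodic with respect to $V$ if for every $B\in\mathcal{F}$ with $\theta^{-1}B=B$: $V(B)\in\{0,1\}$, and $V(B)=0$ or $V(B^c)=0$. *)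

From HB Require Import structures.
From mathcomp Require Import all_boot all_order all_algebra.
From mathcomp Require Import all_classical all_reals topology normedtype sequences measure lebesgue_stieltjes_measure lebesgue_measure.
Set Implicit Arguments. Unset Strict Implicit. Unset Printing Implicit Defensive.
Import Order.TTheory GRing.Theory Num.Theory.
Import numFieldNormedType.Exports.
Local Open Scope classical_set_scope.
Local Open Scope ring_scope.

Section Defs.
Context (d : measure_display) (T : measurableType d) (R : realType).

(* A finitely additive probability on the sigma-algebra F of T
   (only its values on measurable sets matter). *)
Definition fin_add_prob (P : set T -> R) : Prop :=
  [/\ forall A, measurable A -> 0 <= P A,
      P setT = 1 &
      forall A B, measurable A -> measurable B -> A `&` B = set0 ->
        P (A `|` B) = P A + P B].

Definition upper_prob (Ps : set (set T -> R)) (A : set T) : R :=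
  sup [set P A | P in Ps].

Definition preserves (V : set T -> R) (theta : T -> T) : Prop :=
  forall A, measurable A -> V (theta @^-1` A) = V A.

Definition cont_below (V : set T -> R) : Prop :=
  forall A : nat -> set T, (forall n, measurable (A n)) ->
    (forall n, A n `<=` A n.+1) ->
    V (A n) @[n --> \oo] --> V (\bigcup_n A n).

Definition cont_above (V : set T -> R) : Prop :=
  forall A : nat -> set T, (forall n, measurable (A n)) ->
    (forall n, A n.+1 `<=` A n) ->
    V (A n) @[n --> \oo] --> V (\bigcap_n A n).

Definition cont (V : set T -> R) : Prop := cont_below V /\ cont_above V.

Definition quasi_surely (V : set T -> R) (Q : T -> Prop) : Prop :=
  exists A, [/\ measurable A, V A = 0 & forall w, ~ A w -> Q w].

Definition qs_constant (V : set T -> R) (xi : T -> R) : Prop :=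
  exists c : R, V [set w | xi w <> c] = 0.

Definition ergodic (V : set T -> R) (theta : T -> T) : Prop :=
  forall B, measurable B -> theta @^-1` B = B ->
    (V B = 0 \/ V B = 1) /\ (V B = 0 \/ V (~` B) = 0).

Definition stmt_ii (V : set T -> R) (theta : T -> T) : Prop :=
  forall xi : T -> R, measurable_fun setT xi ->
    (exists M : R, forall w, `|xi w| <= M) ->
    (forall w, xi (theta w) = xi w) -> qs_constant V xi.

Definition stmt_iii (V : set T -> R) (theta : T -> T) : Prop :=
  forall xi : T -> R, measurable_fun setT xi ->
    quasi_surely V (fun w => xi (theta w) = xi w) -> qs_constant V xi.

End Defs.

(* (iii) => (ii) is immediate and (ii) => (i) applies (ii) to the indicator
   of an invariant set.  For (i) => (iii), let xi \o theta = xi outside a null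
   set A.  A superlevel set B = {xi > r} is then invariant outside A, and
   B' = limsup_n theta^-n B is exactly invariant and agrees with B outside
   N = \bigcup_n theta^-n A, which is null because theta preserves V and V is
   continuous from below.  Ergodicity makes B', hence B, trivial, and then xi
   equals inf {r | V {xi > r} = 0} quasi-surely, by countable subadditivity on
   null sets. *)

From mathcomp Require Import all_boot all_order all_algebra.
From mathcomp Require Import all_classical all_reals topology normedtype sequences measure lebesgue_stieltjes_measure lebesgue_measure.
From mathcomp Require Import numfun measurable_realfun lra.
Set Implicit Arguments. Unset Strict Implicit. Unset Printing Implicit Defensive.
Import Order.TTheory GRing.Theory Num.Theory.
Import numFieldNormedType.Exports.
Local Open Scope classical_set_scope.
Local Open Scope ring_scope.

Section fin_add_prob_theory.
Context (d : measure_display) (T : measurableType d) (R : realType).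
Variable P : set T -> R.
Hypothesis hP : fin_add_prob P.

Lemma fin_add_prob0 : P set0 = 0.
Proof.
case: hP => _ _ hadd; have := hadd set0 set0 measurable0 measurable0 (setI0 _).
rewrite setU0; lra.
Qed.

Lemma fin_add_probC A : measurable A -> P (~` A) = 1 - P A.
Proof.
move=> mA; case: hP => _ P1 hadd.
have := hadd A (~` A) mA (measurableC mA) (setICr A).
rewrite setUCr P1; lra.
Qed.

Lemma le_fin_add_prob A B : measurable A -> measurable B -> A `<=` B ->
  P A <= P B.
Proof.
move=> mA mB AB; case: hP => P0 _ hadd.
rewrite -(setDUK AB) (hadd _ _ mA (measurableD mB mA) (setDIK _ _)).
by rewrite lerDl P0 //; exact: measurableD.
Qed.

Lemma fin_add_prob_le1 A : measurable A -> P A <= 1.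
Proof.
move=> mA; have := fin_add_probC mA; case: hP => P0 _ _.
have := P0 _ (measurableC mA); lra.
Qed.

Lemma fin_add_probU A B : measurable A -> measurable B ->
  P (A `|` B) <= P A + P B.
Proof.
move=> mA mB; case: (hP) => _ _ hadd.
rewrite -[A `|` B]setD0 -(setDv A) -setUDr.
rewrite (hadd _ _ mA (measurableD mB mA) (setDIK _ _)).
by rewrite lerD2l le_fin_add_prob //; exact: measurableD.
Qed.

End fin_add_prob_theory.

Section measurable_level_sets.
Context (d : measure_display) (T : measurableType d) (R : realType).
Variable f : T -> R.
Hypothesis mf : measurable_fun setT f.

Lemma measurable_superlevel r : measurable [set w | r < f w].
Proof.
have := mf measurableT (measurable_itv `]r, +oo[); rewrite setTI.
by congr measurable; apply/seteqP; split=> w /=; rewrite in_itv /= andbT.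
Qed.

Lemma measurable_sublevel r : measurable [set w | f w < r].
Proof.
have := mf measurableT (measurable_itv `]-oo, r[); rewrite setTI.
by congr measurable; apply/seteqP; split=> w /=; rewrite in_itv.
Qed.

Lemma measurable_neq c : measurable [set w | f w <> c].
Proof.
by have := mf measurableT (measurableC (measurable_set1 c)); rewrite setTI.
Qed.

End measurable_level_sets.

Section orbit_limsup.
Context (T : Type) (theta : T -> T).

Definition orbit_limsup (B : set T) : set T :=
  \bigcap_m \bigcup_n (iter (n + m) theta @^-1` B).

Lemma preimage_orbit_limsup B : theta @^-1` orbit_limsup B = orbit_limsup B.
Proof.
apply/seteqP; split=> w /= Bw m _.
  have [n _ Bn] := Bw m I; exists n.+1 => //=.
  by move: Bn; rewrite /= -iterSr.
have [n _ Bn] := Bw m.+1 I; exists n => //=.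
by move: Bn; rewrite /= addnS iterSr.
Qed.

Lemma orbit_limsup_qsE A B : (forall w, ~ A w -> (B (theta w) <-> B w)) ->
  forall w, ~ (\bigcup_n iter n theta @^-1` A) w -> (orbit_limsup B w <-> B w).
Proof.
move=> AB w orbit_notA.
have B_iter n : B (iter n theta w) <-> B w.
  elim: n => [//|n IHn] /=; rewrite -IHn; apply: AB => Aw.
  by apply: orbit_notA; exists n.
split=> [Bw | Bw m _]; last by exists 0%N => //; exact/B_iter.
by have [n _ Bn] := Bw 0%N I; exact/(B_iter (n + 0)%N).
Qed.

End orbit_limsup.

Section upper_probability.
Context (d : measure_display) (T : measurableType d) (R : realType).
Variable Ps : set (set T -> R).
Hypothesis hPs : forall P, Ps P -> fin_add_prob P.
Hypothesis hne : Ps !=set0.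
Local Notation V := (upper_prob Ps).

Lemma upper_prob_ge P A : Ps P -> measurable A -> P A <= V A.
Proof.
move=> PP mA; apply: ub_le_sup; last by exists P.
by exists 1 => _ [Q PQ <-]; apply: fin_add_prob_le1 => //; exact: hPs.
Qed.

Lemma upper_prob_le A x : (forall P, Ps P -> P A <= x) -> V A <= x.
Proof.
move=> Ax; apply: ge_sup => [|_ [P PP <-]]; last exact: Ax.
by case: hne => P PP; exists (P A), P.
Qed.

Lemma upper_prob_ge0 A : measurable A -> 0 <= V A.
Proof.
move=> mA; case: hne => P PP; apply: le_trans (upper_prob_ge PP mA).
by case: (hPs PP) => P0 _ _; exact: P0.
Qed.

Lemma upper_prob_le1 A : measurable A -> V A <= 1.
Proof.
by move=> mA; apply: upper_prob_le => P PP; apply: fin_add_prob_le1 => //; exact: hPs.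
Qed.

Lemma upper_probT : V setT = 1.
Proof.
apply/eqP; rewrite eq_le upper_prob_le1 //=; case: hne => P PP.
by apply: le_trans (upper_prob_ge PP measurableT); case: (hPs PP) => _ -> _.
Qed.

Lemma upper_prob0 : V set0 = 0.
Proof.
apply/eqP; rewrite eq_le upper_prob_ge0 // andbT.
by apply: upper_prob_le => P PP; rewrite fin_add_prob0 //; exact: hPs.
Qed.

Lemma le_upper_prob A B : measurable A -> measurable B -> A `<=` B ->
  V A <= V B.
Proof.
move=> mA mB AB; apply: upper_prob_le => P PP.
apply: le_trans (upper_prob_ge PP mB).
by apply: le_fin_add_prob => //; exact: hPs.
Qed.

Lemma upper_probU A B : measurable A -> measurable B ->
  V (A `|` B) <= V A + V B.
Proof.
move=> mA mB; apply: upper_prob_le => P PP.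
apply: le_trans (fin_add_probU (hPs PP) mA mB) _.
by apply: lerD; exact: upper_prob_ge.
Qed.

Lemma upper_prob_nullS A B : measurable A -> measurable B -> B `<=` A ->
  V A = 0 -> V B = 0.
Proof.
move=> mA mB BA VA0; apply/eqP; rewrite eq_le upper_prob_ge0 // andbT -VA0.
exact: le_upper_prob.
Qed.

Lemma upper_prob_nullU A B : measurable A -> measurable B ->
  V A = 0 -> V B = 0 -> V (A `|` B) = 0.
Proof.
move=> mA mB VA0 VB0; apply/eqP; rewrite eq_le upper_prob_ge0 ?andbT.
  by have := upper_probU mA mB; rewrite VA0 VB0 addr0.
exact: measurableU.
Qed.

Lemma upper_prob_nullC A : measurable A -> V (~` A) = 0 -> V A = 1.
Proof.
move=> mA VC0; apply/eqP; rewrite eq_le upper_prob_le1 //=; case: hne => P PP.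
apply: le_trans (upper_prob_ge PP mA).
have := upper_prob_ge PP (measurableC mA).
by rewrite VC0 fin_add_probC //; [lra | exact: hPs].
Qed.

Lemma upper_prob_null_bigcup (F : nat -> set T) : cont_below V ->
  (forall n, measurable (F n)) -> (forall n, V (F n) = 0) ->
  V (\bigcup_n F n) = 0.
Proof.
move=> Vcb mF VF0.
pose G n := \big[setU/set0]_(i < n.+1) F i.
have mG n : measurable (G n) by exact: bigsetU_measurable.
have GS n : G n.+1 = G n `|` F n.+1 by rewrite /G big_ord_recr.
have VG0 n : V (G n) = 0.
  elim: n => [|n IHn]; first by rewrite /G big_ord1.
  by rewrite GS; exact: upper_prob_nullU.
have G_incr n : G n `<=` G n.+1 by rewrite GS; exact: subsetUl.
rewrite -bigcup_bigsetU_bigcup -/G.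
have := Vcb G mG G_incr; rewrite (_ : (fun n => V (G n)) = cst 0); last first.
  exact: funext.
by move=> VG_cvg; apply/esym; exact: cvg_unique (cvg_cst 0) VG_cvg.
Qed.

Lemma upper_prob_null_qsS N A B : measurable N -> measurable A -> measurable B ->
  V N = 0 -> (forall w, ~ N w -> A w -> B w) -> V B = 0 -> V A = 0.
Proof.
move=> mN mA mB VN0 AB VB0.
apply: upper_prob_nullS (upper_prob_nullU mB mN VB0 VN0) => //.
  exact: measurableU.
by move=> w Aw; have [Nw|Nw] := pselect (N w); [right | left; exact: AB Nw Aw].
Qed.

Section quasi_sure_constancy.
Hypothesis Vcb : cont_below V.
Variable xi : T -> R.
Hypothesis mxi : measurable_fun setT xi.
Hypothesis superlevel_trivial : forall r,
  V [set w | r < xi w] = 0 \/ V (~` [set w | r < xi w]) = 0.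

Let S := [set r | V [set w | r < xi w] = 0].

Let S_ge r s : S r -> r <= s -> S s.
Proof.
move=> Sr rs; apply: upper_prob_nullS Sr; try exact: measurable_superlevel.
by move=> w; apply: le_lt_trans rs.
Qed.

Let upper_probT_neq0 : V setT <> 0.
Proof. by rewrite upper_probT; apply/eqP; rewrite oner_eq0. Qed.

Let S_neq0 : S !=set0.
Proof.
apply: contrapT => noS; apply: upper_probT_neq0.
rewrite (_ : setT = \bigcup_n ~` [set w | n%:R < xi w]).
  apply: upper_prob_null_bigcup => // n.
    exact/measurableC/measurable_superlevel.
  by have [Sn|//] := superlevel_trivial n%:R; exfalso; apply: noS; exists n%:R.
apply/seteqP; split=> w // _; exists (Num.truncn (xi w)).+1 => //=.
by apply/negP; rewrite -leNgt ltW // truncnS_gt.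
Qed.

Let S_lbound : has_lbound S.
Proof.
have [n notSn] : exists n : nat, ~ S (- n%:R).
  apply/existsNP => Sn; apply: upper_probT_neq0.
  rewrite (_ : setT = \bigcup_n [set w | - n%:R < xi w]).
    by apply: upper_prob_null_bigcup => // n; exact: measurable_superlevel.
  apply/seteqP; split=> w // _; exists (Num.truncn (- xi w)).+1 => //=.
  by rewrite ltrNl truncnS_gt.
exists (- n%:R) => r Sr; rewrite leNgt; apply/negP => rn.
by apply: notSn; apply: S_ge Sr (ltW rn).
Qed.

Let superlevel_inf_null : V [set w | inf S < xi w] = 0.
Proof.
rewrite (_ : [set w | _] = \bigcup_k [set w | inf S + k.+1%:R^-1 < xi w]).
  apply: upper_prob_null_bigcup => // k; first exact: measurable_superlevel.
  have inf_lt_k : inf S < inf S + k.+1%:R^-1 by rewrite ltrDl invr_gt0 ltr0Sn.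
  by have [r Sr /ltW] := inf_lt S_neq0 inf_lt_k; exact: S_ge.
apply/seteqP; split=> w /=; first by move=> /ltr_add_invr [k]; exists k.
by case=> k _; apply: lt_trans; rewrite ltrDl invr_gt0 ltr0Sn.
Qed.

Let sublevel_inf_null : V [set w | xi w < inf S] = 0.
Proof.
apply: (@upper_prob_nullS (\bigcup_k ~` [set w | inf S - k.+1%:R^-1 < xi w])).
- by apply: bigcupT_measurable => k; exact/measurableC/measurable_superlevel.
- exact: measurable_sublevel.
- move=> w /= /ltr_add_invr [k xik]; exists k => //=.
  by apply/negP; rewrite -leNgt lerBrDr ltW.
- apply: upper_prob_null_bigcup => // k.
    exact/measurableC/measurable_superlevel.
  have [Sk|//] := superlevel_trivial (inf S - k.+1%:R^-1).
  have := ge_inf S_lbound Sk; rewrite lerBrDr gerDl leNgt invr_gt0 ltr0Sn.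
  by [].
Qed.

Lemma qs_constant_of_superlevel_trivial : qs_constant V xi.
Proof.
exists (inf S).
rewrite (_ : [set w | _] = [set w | xi w < inf S] `|` [set w | inf S < xi w]).
  exact: upper_prob_nullU (measurable_sublevel mxi _)
    (measurable_superlevel mxi _) sublevel_inf_null superlevel_inf_null.
apply/seteqP; split=> w /=.
  by move/eqP; rewrite neq_lt => /orP[]; [left | right].
by case=> xiw xiS; move: xiw; rewrite xiS ltxx.
Qed.

End quasi_sure_constancy.

Lemma stmt_iii_ii theta : stmt_iii V theta -> stmt_ii V theta.
Proof.
move=> h3 xi mxi _ xi_inv; apply: h3 => //.
by exists set0; split; [exact: measurable0 | exact: upper_prob0 | move=> w _].
Qed.

Lemma stmt_ii_ergodic theta : stmt_ii V theta -> ergodic V theta.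
Proof.
move=> h2 B mB thetaB.
have [c Vc0] : qs_constant V (\1_B : T -> R).
  apply: h2; first exact: measurable_indic.
    exists 1 => w; rewrite indicE.
    by case: (w \in B); rewrite ?normr1 ?normr0.
  by move=> w; rewrite -[in RHS]thetaB.
have mc := measurable_neq (measurable_indic mB) c.
have [VB0|VBC0] : V B = 0 \/ V (~` B) = 0.
- have [c1 | c_neq1] := eqVneq c 1; [right | left].
    apply: upper_prob_nullS mc (measurableC mB) _ Vc0 => w /= notBw.
    by rewrite c1 indicE memNset //; apply/eqP; rewrite eq_sym oner_neq0.
  apply: upper_prob_nullS mc mB _ Vc0 => w /= Bw.
  by rewrite indicE mem_set //; apply/eqP; rewrite eq_sym.
- by split; left.
- by split; right => //; exact: upper_prob_nullC.
Qed.

Section invariance.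
Variable theta : T -> T.
Hypothesis mtheta : measurable_fun setT theta.
Hypothesis Vtheta : preserves V theta.

Lemma measurable_preimage_iter n X : measurable X ->
  measurable (iter n theta @^-1` X).
Proof.
elim: n X => [//|n IHn] X mX /=.
by apply: (IHn (theta @^-1` X)); rewrite -[_ @^-1` _]setTI; exact: mtheta.
Qed.

Lemma upper_prob_preimage_iter n X : measurable X ->
  V (iter n theta @^-1` X) = V X.
Proof.
elim: n X => [//|n IHn] X mX.
have mthetaX : measurable (theta @^-1` X).
  by rewrite -[_ @^-1` _]setTI; exact: mtheta.
by rewrite -(Vtheta mX) -(IHn _ mthetaX).
Qed.

Hypothesis Vcb : cont_below V.

Lemma ergodic_qs_invariant A B : ergodic V theta ->
  measurable A -> measurable B -> V A = 0 ->
  (forall w, ~ A w -> (B (theta w) <-> B w)) -> V B = 0 \/ V (~` B) = 0.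
Proof.
move=> erg mA mB VA0 AB.
pose N := \bigcup_n (iter n theta @^-1` A).
have mN : measurable N.
  by apply: bigcupT_measurable => n; exact: measurable_preimage_iter.
have VN0 : V N = 0.
  apply: upper_prob_null_bigcup => // n; first exact: measurable_preimage_iter.
  by rewrite upper_prob_preimage_iter.
have mB' : measurable (orbit_limsup theta B).
  apply: bigcapT_measurable => m; apply: bigcupT_measurable => n.
  exact: measurable_preimage_iter.
have B'E := orbit_limsup_qsE AB.
have [_ [VB'0 | VB'C0]] := erg _ mB' (preimage_orbit_limsup theta B).
  left.
  by apply: upper_prob_null_qsS mN mB mB' VN0 _ VB'0 => w /B'E B'Ew /B'Ew.
right; apply: upper_prob_null_qsS mN (measurableC mB) (measurableC mB') VN0 _ VB'C0.
by move=> w /B'E B'Ew notBw /B'Ew.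
Qed.

Lemma ergodic_stmt_iii : ergodic V theta -> stmt_iii V theta.
Proof.
move=> erg xi mxi [A [mA VA0 xi_inv]].
apply: qs_constant_of_superlevel_trivial => // r.
apply: ergodic_qs_invariant erg mA (measurable_superlevel mxi r) VA0 _.
by move=> w /xi_inv /= ->.
Qed.

End invariance.

End upper_probability.

Theorem theorem5 (d : measure_display) (T : measurableType d) (R : realType)
  (Ps : set (set T -> R))
  (hPs : forall P, Ps P -> fin_add_prob P)
  (hne : Ps !=set0)
  (theta : T -> T)
  (htheta : measurable_fun setT theta)
  (hpres : preserves (upper_prob Ps) theta) :
  let V := upper_prob Ps in
  [/\ stmt_iii V theta -> stmt_ii V theta,
      stmt_ii V theta -> ergodic V theta,
      cont_below V -> (stmt_ii V theta <-> ergodic V theta) &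
      cont V -> (ergodic V theta <-> stmt_ii V theta) /\
                (stmt_ii V theta <-> stmt_iii V theta)].
Proof.
move=> V.
have ii_erg : stmt_ii V theta -> ergodic V theta by exact: stmt_ii_ergodic.
have iii_ii : stmt_iii V theta -> stmt_ii V theta by exact: stmt_iii_ii.
have erg_iii : cont_below V -> ergodic V theta -> stmt_iii V theta.
  by move=> Vcb; exact: ergodic_stmt_iii.
have erg_ii : cont_below V -> ergodic V theta -> stmt_ii V theta.
  by move=> Vcb /(erg_iii Vcb) /iii_ii.
have ii_iii : cont_below V -> stmt_ii V theta -> stmt_iii V theta.
  by move=> Vcb /ii_erg /(erg_iii Vcb).
split=> // [Vcb | [Vcb _]]; first by split; [exact: ii_erg | exact: erg_ii].
by split; split; [exact: erg_ii | exact: ii_erg | exact: ii_iii | exact: iii_ii].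
Qed.
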